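(* Let $J$ be a countable set and $\mathcal{A}$ the non-unital algebra of finitely supported functions $J\to\mathbb{R}$ with pointwise operations. Let $\sigma:J\to J$ be a bijection and $\tilde{\sigma}(f)=f\circ\sigma^{-1}$. The center of the skew polynomial ring $\mathcal{A}[x,\tilde{\sigma},0]$ is $$Z(\mathcal{A}[x,\tilde{\sigma},0])=\Big\{\sum_{k=0}^m f_kx^k : f_k\in\mathcal{A},\ f_k=0\text{ on } Sep^k(J)\text{ and }\tilde{\sigma}(f_k)=f_k\text{ for all }k\Big\}.$$
   Context: $\mathcal{A}[x,\tilde{\sigma},0]$ is the set of formal sums $\sum_{k=0}^m f_kx^k$ with $f_k\in\mathcal{A}$, with coefficientwise addition and multiplication the bilinear extension of $(fx^k)(gx^l)=f\,\tilde{\sigma}^k(g)\,x^{k+l}$. For an integer $k$, $Sep^k(J)=\{p\in J:\sigma^k(p)\neq p\}$ (so $Sep^0(J)=\emptyset$). *)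

From Stdlib Require Import Reals List.
Open Scope R_scope.

Definition fin_supp {J : Type} (f : J -> R) : Prop :=
  exists s : list J, forall j, f j <> 0 -> In j s.

(* An element sum_{k} f_k x^k of A[x, sigma~, 0] is encoded as its coefficient
   sequence p : nat -> (J -> R): every coefficient lies in A (finitely
   supported) and only finitely many coefficients are nonzero. *)
Definition skew_poly {J : Type} (p : nat -> J -> R) : Prop :=
  (forall k, fin_supp (p k)) /\
  exists m : nat, forall k, (m < k)%nat -> forall j, p k j = 0.

(* sigma~^k (g) = g o sigma^{-k}, where sinv is the inverse of sigma. *)
Definition sigma_tilde_pow {J : Type} (sinv : J -> J) (k : nat) (g : J -> R)
  : J -> R := fun j => g (Nat.iter k sinv j).

(* Product: (f x^k)(g x^l) = f sigma~^k(g) x^{k+l}, extended bilinearly: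
   coefficient n of p*q is sum_{k=0}^n p_k * sigma~^k(q_{n-k}). *)
Definition skew_mul {J : Type} (sinv : J -> J) (p q : nat -> J -> R)
  (n : nat) (j : J) : R :=
  sum_f_R0 (fun k => p k j * sigma_tilde_pow sinv k (q (n - k)%nat) j) n.

Definition Sep {J : Type} (sigma : J -> J) (k : nat) (j : J) : Prop :=
  Nat.iter k sigma j <> j.

Definition in_center {J : Type} (sinv : J -> J) (p : nat -> J -> R) : Prop :=
  skew_poly p /\
  forall q, skew_poly q -> forall n j, skew_mul sinv p q n j = skew_mul sinv q p n j.

(* The center is detected by commuting with point masses [delta i d] (the
   indicator of the point [i] placed in degree [d]).  Commuting with
   [delta (sinv^n j) 0] forces [p_n j = 0] off the fixed points of [sigma^n],
   and commuting with [delta j 1] then forces [p_n (sinv j) = p_n j].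
   Conversely, for such [p] the [k]-th term [p_k(j) q_(n-k)(sinv^k j)] of
   [(p q)_n(j)] equals the [(n-k)]-th term [q_(n-k)(j) p_k(sinv^(n-k) j)] of
   [(q p)_n(j)]: both vanish unless [sinv^k j = j], and [p_k] is
   [sinv]-invariant. *)
From Stdlib Require Import Reals List Lia Lra ClassicalEpsilon.
Open Scope R_scope.

Lemma sum_f_R0_rev (f : nat -> R) (n : nat) :
  sum_f_R0 f n = sum_f_R0 (fun k => f (n - k)%nat) n.
Proof.
  revert f; induction n as [|n IHn]; intro f; [reflexivity|].
  rewrite (decomp_sum (fun k => f (S n - k)%nat)) by lia.
  rewrite tech5, (IHn f), Nat.sub_0_r, Rplus_comm; reflexivity.
Qed.

Lemma sum_f_R0_single (f : nat -> R) (i n : nat) :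
  (i <= n)%nat -> (forall k, (k <= n)%nat -> k <> i -> f k = 0) ->
  sum_f_R0 f n = f i.
Proof.
  revert i; induction n as [|n IHn]; intros i Hi Hf.
  - replace i with 0%nat by lia; reflexivity.
  - rewrite tech5; destruct (Nat.eq_dec i (S n)) as [->|Hne].
    + rewrite sum_eq_R0; [ring|].
      intros k Hk; apply Hf; lia.
    + rewrite (IHn i), (Hf (S n)) by (lia || (intros; apply Hf; lia)); ring.
Qed.

Lemma iter_cancel {J : Type} (f g : J -> J) :
  (forall j, g (f j) = j) -> forall k j, Nat.iter k g (Nat.iter k f j) = j.
Proof.
  intros Hgf k; induction k as [|k IHk]; intro j; [reflexivity|].
  rewrite Nat.iter_succ_r; simpl; rewrite Hgf; apply IHk.
Qed.

Definition pt {J : Type} (i j : J) : R :=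
  if excluded_middle_informative (j = i) then 1 else 0.

Definition delta {J : Type} (i : J) (d : nat) : nat -> J -> R :=
  fun k j => if Nat.eq_dec k d then pt i j else 0.

Lemma pt_eq {J : Type} (i : J) : pt i i = 1.
Proof. unfold pt; destruct excluded_middle_informative; congruence. Qed.

Lemma pt_neq {J : Type} (i j : J) : j <> i -> pt i j = 0.
Proof. unfold pt; destruct excluded_middle_informative; congruence. Qed.

Lemma delta_skew_poly {J : Type} (i : J) (d : nat) : skew_poly (delta i d).
Proof.
  split.
  - intro k; exists (i :: nil); intros j Hj; left.
    unfold delta in Hj; destruct Nat.eq_dec; [|congruence].
    unfold pt in Hj; destruct excluded_middle_informative; congruence.
  - exists d; intros k Hk j; unfold delta.
    destruct Nat.eq_dec; [lia | reflexivity].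
Qed.

Section SkewCenter.

Variables (J : Type) (sinv : J -> J).

Lemma skew_mul_delta_r (p : nat -> J -> R) (i : J) (d n : nat) (j : J) :
  (d <= n)%nat ->
  skew_mul sinv p (delta i d) n j = p (n - d)%nat j * pt i (Nat.iter (n - d) sinv j).
Proof.
  intro Hdn; unfold skew_mul, sigma_tilde_pow, delta.
  rewrite (sum_f_R0_single _ (n - d)) by
    (lia || (intros k Hk Hkd; destruct Nat.eq_dec; [lia | ring])).
  destruct Nat.eq_dec; [reflexivity | lia].
Qed.

Lemma skew_mul_delta_l (p : nat -> J -> R) (i : J) (d n : nat) (j : J) :
  (d <= n)%nat ->
  skew_mul sinv (delta i d) p n j = pt i j * p (n - d)%nat (Nat.iter d sinv j).
Proof.
  intro Hdn; unfold skew_mul, sigma_tilde_pow, delta.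
  rewrite (sum_f_R0_single _ d) by
    (lia || (intros k Hk Hkd; destruct Nat.eq_dec; [lia | ring])).
  destruct Nat.eq_dec; [reflexivity | lia].
Qed.

Lemma center_coef_eq0 (p : nat -> J -> R) (n : nat) (j : J) :
  in_center sinv p -> Nat.iter n sinv j <> j -> p n j = 0.
Proof.
  intros [_ Hcomm] Hnfix.
  pose proof (Hcomm _ (delta_skew_poly (Nat.iter n sinv j) 0) n j) as E.
  rewrite skew_mul_delta_r, skew_mul_delta_l, !Nat.sub_0_r, pt_eq, pt_neq in E
    by (auto || lia).
  lra.
Qed.

Lemma center_coef_sinv (p : nat -> J -> R) (n : nat) (j : J) :
  in_center sinv p -> p n (sinv j) = p n j.
Proof.
  intro Hp.
  pose proof (proj2 Hp _ (delta_skew_poly j 1) (S n) j) as E.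
  rewrite skew_mul_delta_r, skew_mul_delta_l, pt_eq in E by lia.
  replace (S n - 1)%nat with n in E by lia.
  simpl in E.
  destruct (excluded_middle_informative (Nat.iter n sinv j = j)) as [Hfix|Hnfix].
  - rewrite Hfix, pt_eq in E; lra.
  - rewrite pt_neq in E by exact Hnfix.
    rewrite (center_coef_eq0 p n j Hp Hnfix); lra.
Qed.

Lemma sinv_invariant_iter (f : J -> R) :
  (forall j, f (sinv j) = f j) -> forall i j, f (Nat.iter i sinv j) = f j.
Proof.
  intros Hf i j; induction i as [|i IHi]; [reflexivity|].
  simpl; rewrite Hf; exact IHi.
Qed.

Lemma in_center_of_fixed_coefs (p : nat -> J -> R) :
  skew_poly p ->
  (forall k j, Nat.iter k sinv j <> j -> p k j = 0) ->
  (forall k j, p k (sinv j) = p k j) ->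
  in_center sinv p.
Proof.
  intros Hp Hoff Hinv; split; [exact Hp|]; intros q _ n j.
  unfold skew_mul, sigma_tilde_pow.
  rewrite (sum_f_R0_rev (fun k => q k j * _)).
  apply sum_eq; intros k Hk.
  replace (n - (n - k))%nat with k by lia.
  rewrite (sinv_invariant_iter _ (Hinv k)).
  destruct (excluded_middle_informative (Nat.iter k sinv j = j)) as [Hfix|Hnfix].
  - rewrite Hfix; ring.
  - rewrite (Hoff k j Hnfix); ring.
Qed.

End SkewCenter.

Lemma iter_fixed_inv_iff {J : Type} (sigma sinv : J -> J) :
  (forall j, sinv (sigma j) = j) -> (forall j, sigma (sinv j) = j) ->
  forall k j, Nat.iter k sigma j = j <-> Nat.iter k sinv j = j.
Proof.
  intros Hs1 Hs2 k j; split; intro Hfix; rewrite <- Hfix at 1;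
    apply iter_cancel; assumption.
Qed.

Theorem theorem9 (J : Type)
  (countJ : exists e : J -> nat, forall a b, e a = e b -> a = b)
  (sigma sinv : J -> J)
  (Hs1 : forall j, sinv (sigma j) = j) (Hs2 : forall j, sigma (sinv j) = j)
  (p : nat -> J -> R) :
  in_center sinv p <->
  (skew_poly p /\
   forall k : nat,
     (forall j, Sep sigma k j -> p k j = 0) /\
     (forall j, sigma_tilde_pow sinv 1 (p k) j = p k j)).
Proof.
  pose proof (iter_fixed_inv_iff sigma sinv Hs1 Hs2) as Hfix.
  unfold Sep, sigma_tilde_pow; simpl.
  split.
  - intro Hp; split; [exact (proj1 Hp)|]; intro k; split.
    + intros j Hsep; apply (center_coef_eq0 _ sinv); [exact Hp|].
      now rewrite <- Hfix.
    + intro j; apply center_coef_sinv; exact Hp.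
  - intros [Hp Hcoef]; apply in_center_of_fixed_coefs; [exact Hp | |].
    + intros k j Hnfix; apply (proj1 (Hcoef k)); now rewrite Hfix.
    + intros k j; apply (proj2 (Hcoef k)).
Qed.
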